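(* Let $D\subseteq\mathbb{R}^n$ be nonempty, convex, closed and bounded, and let $f:\mathbb{R}^n\to\mathbb{R}$ be continuously differentiable. Then in Method (CGMIS) (described in the context), the number of iterations (changes of the index $k$) at each stage $p$ is finite; i.e., for every $p$ the restart condition $\mu(x^k)<\delta_p$ is reached after finitely many iterations.
   Context: Notation: $f'(x)$ is the gradient of $f$; $\mu(x)=\max_{y\in D}\langle f'(x),x-y\rangle$. Method (CGMIS): Choose $w^0\in D$, $\beta\in(0,1)$, and a positive sequence $\{\delta_p\}$ with $\delta_p\to0$. Set $p=1$. (Step 0) Choose a sequence of numbers $\tau_{l,p}\in(0,1)$, $l=0,1,\dots$, with $\tau_{l,p}\to0$ as $l\to\infty$; set $k=0$, $l=0$, $x^0=w^{p-1}$, and choose $\lambda_0\in(0,\tau_{0,p}]$. (Step 1) If $\mu(x^k)<\delta_p$, set $w^p=x^k$, replace $p$ by $p+1$ and go to Step 0 (restart). Otherwise choose any $z^k\in D$ with $\langle f'(x^k),x^k-z^k\rangle\ge\delta_p$. (Step 2) Set $d^k=z^k-x^k$, $x^{k+1}=x^k+\lambda_k d^k$. If $f(x^{k+1})\le f(x^k)+\beta\lambda_k\langle f'(x^k),d^k\rangle$, choose any $\lambda_{k+1}\in[\lambda_k,\tau_{l,p}]$ (with $l$ unchanged). Otherwise set $\lambda'_{k+1}=\min\{\lambda_k,\tau_{l+1,p}\}$, replace $l$ by $l+1$, and choose any $\lambda_{k+1}\in(0,\lambda'_{k+1}]$. Set $k=k+1$ and go to Step 1. The iterations with a fixed value of $p$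 form stage $p$. *)

From Stdlib Require Fin.
From Stdlib Require Import Reals Lra ClassicalEpsilon.
Open Scope R_scope.

Definition vec (n : nat) := Fin.t n -> R.

Fixpoint dot (n : nat) : vec n -> vec n -> R :=
  match n return vec n -> vec n -> R with
  | O => fun _ _ => 0
  | S m => fun x y =>
      x Fin.F1 * y Fin.F1 + dot m (fun i => x (Fin.FS i)) (fun i => y (Fin.FS i))
  end.
Arguments dot {n} x y.

Definition vadd {n} (x y : vec n) : vec n := fun i => x i + y i.
Definition vsub {n} (x y : vec n) : vec n := fun i => x i - y i.
Definition vscale {n} (a : R) (x : vec n) : vec n := fun i => a * x i.
Definition vnorm {n} (x : vec n) : R := sqrt (dot x x).

Definition set_nonempty {n} (D : vec n -> Prop) : Prop := exists x, D x.
Definition set_convex {n} (D : vec n -> Prop) : Prop :=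
  forall x y t, D x -> D y -> 0 <= t <= 1 ->
    D (vadd (vscale (1 - t) x) (vscale t y)).
Definition set_closed {n} (D : vec n -> Prop) : Prop :=
  forall x, (forall eps, 0 < eps -> exists y, D y /\ vnorm (vsub y x) < eps) -> D x.
Definition set_bounded {n} (D : vec n -> Prop) : Prop :=
  exists M, forall x, D x -> vnorm x <= M.

Definition has_gradient {n} (f : vec n -> R) (x g : vec n) : Prop :=
  forall eps, 0 < eps -> exists del, 0 < del /\
    forall y, vnorm (vsub y x) < del ->
      Rabs (f y - f x - dot g (vsub y x)) <= eps * vnorm (vsub y x).

Definition vcontinuous {n} (F : vec n -> vec n) : Prop :=
  forall x eps, 0 < eps -> exists del, 0 < del /\
    forall y, vnorm (vsub y x) < del -> vnorm (vsub (F y) (F x)) < eps.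

Definition C1_with_gradient {n} (f : vec n -> R) (f' : vec n -> vec n) : Prop :=
  (forall x, has_gradient f x (f' x)) /\ vcontinuous f'.

(* mu(x) = max_{y in D} <f'(x), x - y>  (the max exists when D is set_nonempty
   and compact; the default value 0 is never used under the hypotheses). *)
Definition is_max_gap {n} (D : vec n -> Prop) (f' : vec n -> vec n) (x : vec n)
  (m : R) : Prop :=
  (exists y, D y /\ m = dot (f' x) (vsub x y)) /\
  (forall y, D y -> dot (f' x) (vsub x y) <= m).

Definition mu {n} (D : vec n -> Prop) (f' : vec n -> vec n) (x : vec n) : R :=
  epsilon (inhabits 0) (is_max_gap D f' x).

From Stdlib Require Import Reals Lra Lia FunctionalExtensionality ClassicalEpsilon Classical.
Open Scope R_scope.

(* Suppose a stage never restarts.  As [f'] is uniformly continuous on the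
   compact set [D], the mean value theorem gives one step length below which the
   Armijo test succeeds for every direction with descent gap at least [delta_p].
   Since [tau_{l,p} -> 0], rejections only occur while [l] stays below a fixed
   bound, so the nondecreasing index [l] is eventually constant and all later
   steps are accepted.  Accepted steps never shrink, hence [f] decreases by a
   fixed positive amount at every iteration, contradicting the fact that [f] is
   bounded below on [D]. *)

Ltac vec_ext := apply functional_extensionality; intro; unfold vadd, vsub, vscale; ring.

Lemma dot_comm {n} (u v : vec n) : dot u v = dot v u.
Proof. induction n; simpl; [ring|]. rewrite IHn. ring. Qed.

Lemma dot_addl {n} (u v w : vec n) : dot (vadd u v) w = dot u w + dot v w.
Proof. induction n; simpl; [ring|]. unfold vadd in *. rewrite IHn. ring. Qed.

Lemma dot_addr {n} (u v w : vec n) : dot w (vadd u v) = dot w u + dot w v.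
Proof. rewrite dot_comm, dot_addl, (dot_comm u), (dot_comm v). reflexivity. Qed.

Lemma dot_subl {n} (u v w : vec n) : dot (vsub u v) w = dot u w - dot v w.
Proof. induction n; simpl; [ring|]. unfold vsub in *. rewrite IHn. ring. Qed.

Lemma dot_subr {n} (u v w : vec n) : dot w (vsub u v) = dot w u - dot w v.
Proof. rewrite dot_comm, dot_subl, (dot_comm u), (dot_comm v). reflexivity. Qed.

Lemma dot_scalel {n} a (u w : vec n) : dot (vscale a u) w = a * dot u w.
Proof. induction n; simpl; [ring|]. unfold vscale in *. rewrite IHn. ring. Qed.

Lemma dot_scaler {n} a (u w : vec n) : dot w (vscale a u) = a * dot w u.
Proof. rewrite dot_comm, dot_scalel, dot_comm. reflexivity. Qed.

Lemma dot_vsub_swap {n} (g a b : vec n) : dot g (vsub a b) = - dot g (vsub b a).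
Proof. rewrite !dot_subr. ring. Qed.

Lemma dot_self_ge0 {n} (u : vec n) : 0 <= dot u u.
Proof. induction n; simpl; [lra|]. specialize (IHn (fun i => u (Fin.FS i))). nra. Qed.

Lemma coord_sq_le_dot_self {n} (w : vec n) i : w i * w i <= dot w w.
Proof.
  induction n as [|n IHn].
  - exact (Fin.case0 (fun i => w i * w i <= dot w w) i).
  - pattern i; apply Fin.caseS'; simpl.
    + pose proof (dot_self_ge0 (fun i => w (Fin.FS i))). lra.
    + intro j. pose proof (IHn (fun i => w (Fin.FS i)) j). nra.
Qed.

(* Lagrange's identity in inductive form: the new cross terms make up the
   square of [a V - b U]. *)
Lemma dot_cauchy_schwarz {n} (u v : vec n) : dot u v * dot u v <= dot u u * dot v v.
Proof.
  induction n as [|n IHn]; simpl; [lra|].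
  set (U := fun i => u (Fin.FS i)); set (V := fun i => v (Fin.FS i)).
  pose proof (IHn U V).
  pose proof (dot_self_ge0 (vsub (vscale (u Fin.F1) V) (vscale (v Fin.F1) U))) as Hsq.
  rewrite !dot_subl, !dot_subr, !dot_scalel, !dot_scaler, (dot_comm V U) in Hsq.
  nra.
Qed.

Lemma vnorm_ge0 {n} (u : vec n) : 0 <= vnorm u.
Proof. apply sqrt_pos. Qed.

Lemma dot_self_vnorm {n} (u : vec n) : dot u u = vnorm u * vnorm u.
Proof. unfold vnorm. rewrite sqrt_sqrt; [reflexivity | apply dot_self_ge0]. Qed.

Lemma vnorm_le_of_dot_self {n} (u : vec n) r : 0 <= r -> dot u u <= r * r -> vnorm u <= r.
Proof. intros Hr H. rewrite <- (sqrt_square r Hr). exact (sqrt_le_1_alt _ _ H). Qed.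

Lemma vnorm_lt_of_dot_self {n} (u : vec n) r : 0 <= r -> dot u u < r * r -> vnorm u < r.
Proof. intros Hr H. rewrite <- (sqrt_square r Hr). apply sqrt_lt_1_alt. split; [apply dot_self_ge0 | exact H]. Qed.

Lemma Rabs_coord_le_vnorm {n} (w : vec n) i : Rabs (w i) <= vnorm w.
Proof. rewrite <- sqrt_Rsqr_abs. apply sqrt_le_1_alt, coord_sq_le_dot_self. Qed.

Lemma Rabs_dot_le {n} (u v : vec n) : Rabs (dot u v) <= vnorm u * vnorm v.
Proof.
  pose proof (dot_cauchy_schwarz u v) as Hcs. rewrite !dot_self_vnorm in Hcs.
  pose proof (Rmult_le_pos _ _ (vnorm_ge0 u) (vnorm_ge0 v)).
  pose proof (Rabs_pos (dot u v)).
  rewrite <- (Rabs_right (dot u v * dot u v)), Rabs_mult in Hcs by nra.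
  nra.
Qed.

Lemma vnorm_triangle {n} (u v : vec n) : vnorm (vadd u v) <= vnorm u + vnorm v.
Proof.
  pose proof (Rabs_dot_le u v). pose proof (Rle_abs (dot u v)).
  pose proof (vnorm_ge0 u). pose proof (vnorm_ge0 v).
  intros. apply vnorm_le_of_dot_self; [lra|].
  rewrite dot_addl, !dot_addr, (dot_comm v u), !dot_self_vnorm. nra.
Qed.

Lemma vnorm_scale {n} a (u : vec n) : vnorm (vscale a u) = Rabs a * vnorm u.
Proof.
  unfold vnorm. rewrite dot_scalel, dot_scaler, <- Rmult_assoc, sqrt_mult_alt.
  - rewrite <- (sqrt_Rsqr_abs a). reflexivity.
  - apply Rle_0_sqr.
Qed.

Lemma vnorm_vsub_sym {n} (u v : vec n) : vnorm (vsub u v) = vnorm (vsub v u).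
Proof.
  replace (vsub u v) with (vscale (-1) (vsub v u)) by vec_ext.
  rewrite vnorm_scale, Rabs_left by lra. ring.
Qed.

Lemma vnorm_vsub_triangle {n} (a b c : vec n) :
  vnorm (vsub a c) <= vnorm (vsub a b) + vnorm (vsub b c).
Proof.
  replace (vsub a c) with (vadd (vsub a b) (vsub b c)) by vec_ext. apply vnorm_triangle.
Qed.

Lemma vnorm_vsub_le {n} (a b : vec n) : vnorm (vsub a b) <= vnorm a + vnorm b.
Proof.
  replace (vsub a b) with (vadd a (vscale (-1) b)) by vec_ext.
  eapply Rle_trans; [apply vnorm_triangle|]. rewrite vnorm_scale, Rabs_left by lra. lra.
Qed.

Lemma segment_in_convex {n} (D : vec n -> Prop) a z t :
  set_convex D -> D a -> D z -> 0 <= t <= 1 -> D (vadd a (vscale t (vsub z a))).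
Proof.
  intros Hcv Da Dz Ht.
  replace (vadd a (vscale t (vsub z a))) with (vadd (vscale (1 - t) a) (vscale t z)) by vec_ext.
  apply Hcv; assumption.
Qed.

Definition vcv {n} (u : nat -> vec n) (y : vec n) : Prop :=
  forall eps, 0 < eps -> exists N, forall k, (N <= k)%nat -> vnorm (vsub (u k) y) < eps.

Lemma inv_INR_succ_lt eps : 0 < eps -> exists N, forall k, (N <= k)%nat -> / (INR k + 1) < eps.
Proof.
  intro He. destruct (archimed_cor1 eps He) as [N [HN HN0]]. exists N. intros k Hk.
  apply Rle_lt_trans with (/ INR N); [|exact HN].
  apply Rinv_le_contravar; [apply lt_0_INR; exact HN0|]. apply le_INR in Hk. lra.
Qed.

Lemma Un_cv_reindex (v : nat -> R) l (phi : nat -> nat) :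
  (forall k, (k <= phi k)%nat) -> Un_cv v l -> Un_cv (fun k => v (phi k)) l.
Proof.
  intros Hphi Hv eps He. destruct (Hv eps He) as [N HN]. exists N. intros k Hk.
  apply HN. specialize (Hphi k). lia.
Qed.

(* The index maps [phi] below need not be increasing, only [k <= phi k]: this
   suffices for every use and is trivially stable under composition. *)
Lemma bounded_Rseq_cv_reindex (u : nat -> R) M : (forall k, Rabs (u k) <= M) ->
  exists phi l, (forall k, (k <= phi k)%nat) /\ Un_cv (fun k => u (phi k)) l.
Proof.
  intro HM.
  destruct (Bolzano_Weierstrass u (fun c => -M <= c <= M) (compact_P3 (-M) M)) as [l Hl].
  { intro k. pose proof (HM k). pose proof (Rle_abs (u k)). pose proof (Rle_abs (- u k)).
    rewrite Rabs_Ropp in *. lra. }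
  assert (Hnear : forall k, exists p, (k <= p)%nat /\ Rabs (u p - l) < / (INR k + 1)).
  { intro k. assert (Hpos : 0 < / (INR k + 1)) by (apply Rinv_0_lt_compat; pose proof (pos_INR k); lra).
    apply (Hl (fun y => Rabs (y - l) < / (INR k + 1)) k).
    exists (mkposreal _ Hpos). intros y Hy. exact Hy. }
  destruct (choice _ Hnear) as [phi Hphi].
  exists phi, l. split; [intro k; apply Hphi|].
  intros eps He. destruct (inv_INR_succ_lt eps He) as [N HN]. exists N. intros k Hk.
  unfold R_dist. specialize (Hphi k). specialize (HN k Hk). lra.
Qed.

Lemma bounded_coords_cv_reindex {n} (u : nat -> vec n) M : (forall k i, Rabs (u k i) <= M) ->
  exists phi y, (forall k, (k <= phi k)%nat) /\
    Un_cv (fun k => dot (vsub (u (phi k)) y) (vsub (u (phi k)) y)) 0.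
Proof.
  revert u. induction n as [|n IHn]; intros u HM.
  - exists (fun k => k), (fun _ => 0). split; [intro; lia|].
    intros eps He. exists O. intros. unfold R_dist. simpl. rewrite Rminus_0_r, Rabs_R0. exact He.
  - destruct (bounded_Rseq_cv_reindex (fun k => u k Fin.F1) M (fun k => HM k Fin.F1))
      as [phi1 [l [Hphi1 Hcv1]]].
    destruct (IHn (fun k i => u (phi1 k) (Fin.FS i)) (fun k i => HM (phi1 k) (Fin.FS i)))
      as [phi2 [y [Hphi2 Hcv2]]].
    exists (fun k => phi1 (phi2 k)), (fun i => Fin.caseS' i (fun _ => R) l y).
    split; [intro k; specialize (Hphi1 (phi2 k)); specialize (Hphi2 k); lia|].
    simpl. unfold vsub at 1 2. simpl.
    replace 0 with ((l - l) * (l - l) + 0) by ring.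
    apply CV_plus; [| exact Hcv2].
    assert (Hhead : Un_cv (fun k => u (phi1 (phi2 k)) Fin.F1 - l) (l - l)).
    { apply CV_minus; [exact (Un_cv_reindex _ _ _ Hphi2 Hcv1)|].
      intros eps He; exists O; intros; unfold R_dist. rewrite Rminus_diag, Rabs_R0; exact He. }
    apply CV_mult; exact Hhead.
Qed.

Lemma bounded_vseq_cv_reindex {n} (u : nat -> vec n) M : (forall k, vnorm (u k) <= M) ->
  exists phi y, (forall k, (k <= phi k)%nat) /\ vcv (fun k => u (phi k)) y.
Proof.
  intro HM.
  destruct (bounded_coords_cv_reindex u M
              (fun k i => Rle_trans _ _ _ (Rabs_coord_le_vnorm (u k) i) (HM k)))
    as [phi [y [Hphi Hcv]]].
  exists phi, y. split; [exact Hphi|]. intros eps He.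
  destruct (Hcv (eps * eps) ltac:(nra)) as [N HN]. exists N. intros k Hk.
  apply vnorm_lt_of_dot_self; [lra|]. specialize (HN k Hk). unfold R_dist in HN.
  rewrite Rminus_0_r in HN. eapply Rle_lt_trans; [apply Rle_abs | exact HN].
Qed.

Lemma vcontinuous_uniform_on_bounded {n} (D : vec n -> Prop) (F : vec n -> vec n) M :
  (forall a, D a -> vnorm a <= M) -> vcontinuous F ->
  forall eps, 0 < eps -> exists eta, 0 < eta /\
    forall a b, D a -> D b -> vnorm (vsub a b) < eta -> vnorm (vsub (F a) (F b)) < eps.
Proof.
  intros HM HF eps He. apply NNPP; intro Hn.
  assert (Hbad : forall k, exists ab : vec n * vec n, D (fst ab) /\ D (snd ab) /\
     vnorm (vsub (fst ab) (snd ab)) < / (INR k + 1) /\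
     eps <= vnorm (vsub (F (fst ab)) (F (snd ab)))).
  { intro k. apply NNPP; intro Hk. apply Hn. exists (/ (INR k + 1)). split.
    { apply Rinv_0_lt_compat. pose proof (pos_INR k). lra. }
    intros a b Da Db Hab. apply Rnot_le_lt. intro Hf. apply Hk. exists (a, b). auto. }
  destruct (choice _ Hbad) as [ab Hab].
  destruct (bounded_vseq_cv_reindex (fun k => fst (ab k)) M (fun k => HM _ (proj1 (Hab k))))
    as [phi [y [Hphi Hcv]]].
  destruct (HF y (eps / 2) ltac:(lra)) as [del [Hdel Hd]].
  destruct (Hcv (del / 2) ltac:(lra)) as [N1 HN1].
  destruct (inv_INR_succ_lt (del / 2) ltac:(lra)) as [N2 HN2].
  set (k := max N1 N2).
  specialize (HN1 k ltac:(unfold k; lia)).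
  specialize (HN2 (phi k) ltac:(specialize (Hphi k); unfold k in *; lia)).
  destruct (Hab (phi k)) as [_ [_ [Hclose Hfar]]]. simpl in HN1.
  set (a := fst (ab (phi k))) in *. set (b := snd (ab (phi k))) in *.
  pose proof (vnorm_vsub_triangle b a y) as Hby. rewrite (vnorm_vsub_sym b a) in Hby.
  pose proof (vnorm_vsub_triangle (F a) (F y) (F b)) as Hab'. rewrite (vnorm_vsub_sym (F y)) in Hab'.
  pose proof (Hd a ltac:(lra)). pose proof (Hd b ltac:(lra)). lra.
Qed.

Lemma has_gradient_continuous {n} (f : vec n -> R) x g : has_gradient f x g ->
  forall eps, 0 < eps -> exists del, 0 < del /\
    forall y, vnorm (vsub y x) < del -> Rabs (f y - f x) < eps.
Proof.
  intros Hg eps He. destruct (Hg 1 Rlt_0_1) as [del [Hdel Hd]].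
  set (G := vnorm g + 1). assert (HG : 0 < G) by (pose proof (vnorm_ge0 g); unfold G; lra).
  exists (Rmin del (eps / G)). split; [apply Rmin_pos; [lra | apply Rdiv_lt_0_compat; lra]|].
  intros y Hy. specialize (Hd y (Rlt_le_trans _ _ _ Hy (Rmin_l _ _))).
  assert (Hsmall : G * vnorm (vsub y x) < eps).
  { apply Rlt_le_trans with (G * (eps / G)); [|right; field; lra].
    apply Rmult_lt_compat_l; [lra|]. eapply Rlt_le_trans; [exact Hy | apply Rmin_r]. }
  pose proof (Rabs_dot_le g (vsub y x)).
  pose proof (Rabs_triang (f y - f x - dot g (vsub y x)) (dot g (vsub y x))).
  replace (f y - f x - dot g (vsub y x) + dot g (vsub y x)) with (f y - f x) in * by ring.
  unfold G in Hsmall. lra.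
Qed.

Lemma bounded_below_on_bounded {n} (D : vec n -> Prop) (f : vec n -> R) (f' : vec n -> vec n) M :
  (forall a, D a -> vnorm a <= M) -> (forall x, has_gradient f x (f' x)) ->
  exists m, forall a, D a -> m <= f a.
Proof.
  intros HM Hg. apply NNPP; intro Hn.
  assert (Hbad : forall k, exists a, D a /\ f a < - INR k).
  { intro k. apply NNPP; intro Hk. apply Hn. exists (- INR k). intros a Da.
    apply Rnot_lt_le. intro Hl. apply Hk. exists a. auto. }
  destruct (choice _ Hbad) as [a Ha].
  destruct (bounded_vseq_cv_reindex a M (fun k => HM _ (proj1 (Ha k)))) as [phi [y [Hphi Hcv]]].
  destruct (has_gradient_continuous f y (f' y) (Hg y) 1 Rlt_0_1) as [del [Hdel Hd]].
  destruct (Hcv del Hdel) as [N1 HN1].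
  destruct (INR_archimed 1 (1 - f y) Rlt_0_1) as [N2 HN2].
  set (k := max N1 N2).
  specialize (HN1 k ltac:(unfold k; lia)).
  assert (HN2k : INR N2 <= INR (phi k)) by (apply le_INR; specialize (Hphi k); unfold k in *; lia).
  destruct (Ha (phi k)) as [_ Hfa]. specialize (Hd _ HN1).
  pose proof (Rle_abs (- (f (a (phi k)) - f y))). rewrite Rabs_Ropp in *. lra.
Qed.

Lemma has_gradient_line {n} (f : vec n -> R) (f' : vec n -> vec n) a d t :
  (forall x, has_gradient f x (f' x)) ->
  derivable_pt_lim (fun s => f (vadd a (vscale s d))) t (dot (f' (vadd a (vscale t d))) d).
Proof.
  intros Hg eps He. set (p := vadd a (vscale t d)). set (Nd := vnorm d + 1).
  assert (HNd : 0 < Nd) by (pose proof (vnorm_ge0 d); unfold Nd; lra).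
  destruct (Hg p (eps / Nd) ltac:(apply Rdiv_lt_0_compat; lra)) as [del [Hdel Hd]].
  assert (Hpos : 0 < del / Nd) by (apply Rdiv_lt_0_compat; lra).
  exists (mkposreal _ Hpos). intros h Hh0 Hh. simpl in Hh.
  replace (vadd a (vscale (t + h) d)) with (vadd p (vscale h d)) by (unfold p; vec_ext).
  specialize (Hd (vadd p (vscale h d))).
  replace (vsub (vadd p (vscale h d)) p) with (vscale h d) in Hd by vec_ext.
  rewrite vnorm_scale, dot_scaler in Hd.
  assert (Hh_pos : 0 < Rabs h) by (apply Rabs_pos_lt; exact Hh0).
  assert (Hh_Nd : Rabs h * Nd < del).
  { apply Rlt_le_trans with (del / Nd * Nd); [apply Rmult_lt_compat_r; lra | right; field; lra]. }
  specialize (Hd ltac:(unfold Nd in Hh_Nd; nra)).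
  replace ((f (vadd p (vscale h d)) - f p) / h - dot (f' p) d)
    with ((f (vadd p (vscale h d)) - f p - h * dot (f' p) d) / h) by (field; exact Hh0).
  unfold Rdiv. rewrite Rabs_mult, Rabs_inv.
  apply (Rmult_lt_reg_r (Rabs h)); [exact Hh_pos|].
  rewrite Rmult_assoc, Rinv_l, Rmult_1_r by lra.
  eapply Rle_lt_trans; [exact Hd|].
  apply (Rmult_lt_reg_r Nd); [exact HNd|].
  replace (eps / Nd * (Rabs h * vnorm d) * Nd) with (eps * Rabs h * vnorm d) by (field; lra).
  unfold Nd. nra.
Qed.

(* The mean value theorem along the segment reduces the Armijo test to a bound
   on [f' p - f' a] at nearby points, which uniform continuity provides. *)
Lemma armijo_uniform_step {n} (D : vec n -> Prop) (f : vec n -> R) (f' : vec n -> vec n)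
  M beta delta :
  (forall a, D a -> vnorm a <= M) -> set_convex D -> C1_with_gradient f f' ->
  0 < beta < 1 -> 0 < delta ->
  exists lb, 0 < lb /\ forall a z t, D a -> D z -> delta <= dot (f' a) (vsub a z) ->
    0 < t <= lb ->
    f (vadd a (vscale t (vsub z a))) <= f a + beta * t * dot (f' a) (vsub z a).
Proof.
  intros HM Hcv [Hg Hc] Hb Hdel.
  set (Md := 2 * Rabs M + 1).
  assert (HMd : 0 < Md) by (pose proof (Rabs_pos M); unfold Md; lra).
  assert (Hdiam : forall a b, D a -> D b -> vnorm (vsub a b) <= Md).
  { intros a b Da Db. pose proof (vnorm_vsub_le a b).
    pose proof (HM a Da). pose proof (HM b Db). pose proof (Rle_abs M). unfold Md. lra. }
  set (eps := (1 - beta) * delta / Md).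
  assert (Heps : 0 < eps) by (unfold eps; apply Rdiv_lt_0_compat; nra).
  destruct (vcontinuous_uniform_on_bounded D f' M HM Hc eps Heps) as [eta [Heta Hunif]].
  exists (Rmin (eta / Md) 1). split; [apply Rmin_pos; [apply Rdiv_lt_0_compat|]; lra|].
  intros a z t Da Dz Hdesc [Ht0 Ht].
  assert (Ht_eta : t * Md <= eta).
  { apply Rle_trans with (eta / Md * Md); [|right; field; lra].
    apply Rmult_le_compat_r; [lra|]. eapply Rle_trans; [exact Ht | apply Rmin_l]. }
  assert (Ht1 : t <= 1) by (eapply Rle_trans; [exact Ht | apply Rmin_r]).
  set (d := vsub z a).
  destruct (MVT_cor2 (fun s => f (vadd a (vscale s d))) (fun s => dot (f' (vadd a (vscale s d))) d)
              0 t Ht0 (fun s _ => has_gradient_line f f' a d s Hg)) as [c [Hmvt [Hc0 Hct]]].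
  replace (vadd a (vscale 0 d)) with a in Hmvt by vec_ext.
  set (p := vadd a (vscale c d)) in *.
  assert (Dp : D p) by (apply segment_in_convex; auto; lra).
  pose proof (Hdiam z a Dz Da) as Hd_le. fold d in Hd_le.
  pose proof (vnorm_ge0 d).
  assert (Hpa : vnorm (vsub p a) < eta).
  { replace (vsub p a) with (vscale c d) by (unfold p; vec_ext).
    rewrite vnorm_scale, Rabs_right by lra.
    assert (c * vnorm d <= c * Md) by (apply Rmult_le_compat_l; lra).
    assert (c * Md < t * Md) by (apply Rmult_lt_compat_r; lra).
    lra. }
  assert (Hgap : dot (f' p) d <= dot (f' a) d + (1 - beta) * delta).
  { pose proof (Rabs_dot_le (vsub (f' p) (f' a)) d) as Hcs. rewrite dot_subl in Hcs.
    pose proof (Rle_abs (dot (f' p) d - dot (f' a) d)).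
    pose proof (Hunif p a Dp Da Hpa). pose proof (vnorm_ge0 (vsub (f' p) (f' a))).
    assert (eps * Md = (1 - beta) * delta) by (unfold eps; field; lra).
    nra. }
  assert (Hswap : dot (f' a) d = - dot (f' a) (vsub a z)) by apply dot_vsub_swap.
  rewrite Hswap in Hgap |- *. cbv beta in Hmvt.
  assert (t * dot (f' p) d <= t * (beta * - dot (f' a) (vsub a z))) by (apply Rmult_le_compat_l; nra).
  lra.
Qed.

Lemma nat_nondecreasing_le (g : nat -> nat) :
  (forall k, (g k <= g (S k))%nat) -> forall a b, (a <= b)%nat -> (g a <= g b)%nat.
Proof. intros Hg a b Hab. induction Hab as [|b Hab IH]; [lia|]. specialize (Hg b). lia. Qed.

Lemma nat_nondecreasing_bounded_eventually_const (g : nat -> nat) N :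
  (forall k, (g k <= g (S k))%nat) -> (forall k, (g k <= N)%nat) ->
  exists K, forall k, (K <= k)%nat -> g k = g K.
Proof.
  intros Hg HN.
  enough (H : forall d K, (N - g K <= d)%nat -> exists K', forall k, (K' <= k)%nat -> g k = g K')
    by exact (H N 0%nat ltac:(lia)).
  induction d as [|d IHd]; intros K HK.
  - exists K. intros k Hk. pose proof (nat_nondecreasing_le g Hg K k Hk). pose proof (HN k). lia.
  - destruct (classic (forall k, (K <= k)%nat -> g k = g K)) as [Hconst | Hjump];
      [exists K; exact Hconst|].
    apply not_all_ex_not in Hjump. destruct Hjump as [k Hk].
    apply imply_to_and in Hk. destruct Hk as [HKk Hneq].
    apply (IHd k). pose proof (nat_nondecreasing_le g Hg K k HKk). lia.
Qed.

Section Stage.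

Variables (n : nat) (D : vec n -> Prop) (f : vec n -> R) (f' : vec n -> vec n)
  (M beta delta : R) (tau : nat -> R) (x z : nat -> vec n) (lam : nat -> R) (l : nat -> nat).

Hypothesis D_bounded : forall a, D a -> vnorm a <= M.
Hypothesis D_convex : set_convex D.
Hypothesis f_C1 : C1_with_gradient f f'.
Hypothesis beta_range : 0 < beta < 1.
Hypothesis delta_pos : 0 < delta.
Hypothesis tau_range : forall j, 0 < tau j < 1.
Hypothesis tau_cv : Un_cv tau 0.
Hypothesis x0_in_D : D (x 0%nat).
Hypothesis l0 : l 0%nat = 0%nat.
Hypothesis lam0 : 0 < lam 0%nat <= tau 0%nat.

Local Notation accepted k :=
  (f (x (S k)) <= f (x k) + beta * lam k * dot (f' (x k)) (vsub (z k) (x k))).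

(* Steps 1-2 of a stage in which the restart test never fires. *)
Hypothesis step : forall k,
  D (z k) /\ delta <= dot (f' (x k)) (vsub (x k) (z k)) /\
  x (S k) = vadd (x k) (vscale (lam k) (vsub (z k) (x k))) /\
  ((accepted k /\ l (S k) = l k /\ lam k <= lam (S k) <= tau (l k)) \/
   (~ accepted k /\ l (S k) = S (l k) /\ 0 < lam (S k) <= Rmin (lam k) (tau (S (l k))))).

Lemma stage_invariant k : D (x k) /\ 0 < lam k <= tau (l k).
Proof.
  induction k as [|k [Dx [Hlam Hlam_tau]]]; [rewrite l0; auto|].
  destruct (step k) as [Dz [_ [Hx Hbranch]]]. pose proof (tau_range (l k)).
  split.
  - rewrite Hx. apply segment_in_convex; auto; lra.
  - destruct Hbranch as [[_ [Hl Hlam']] | [_ [Hl Hlam']]]; rewrite Hl; [lra|].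
    pose proof (Rmin_r (lam k) (tau (S (l k)))). lra.
Qed.

(* Once [tau] drops below the uniform Armijo step, a rejection is impossible. *)
Lemma stage_rejected_index_lt : exists N, forall k, ~ accepted k -> (l k < N)%nat.
Proof.
  destruct (armijo_uniform_step D f f' M beta delta D_bounded D_convex f_C1 beta_range delta_pos)
    as [lb [Hlb Harmijo]].
  destruct (tau_cv lb Hlb) as [N HN].
  exists N. intros k Hrej. destruct (Nat.lt_ge_cases (l k) N) as [|Hge]; [assumption|].
  exfalso. apply Hrej.
  specialize (HN (l k) Hge). unfold R_dist in HN. rewrite Rminus_0_r in HN.
  destruct (stage_invariant k) as [Dx Hlam]. destruct (step k) as [Dz [Hdesc [Hx _]]].
  rewrite Hx. apply Harmijo; auto. pose proof (Rle_abs (tau (l k))). lra.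
Qed.

Lemma stage_eventually_accepted : exists K, forall k, (K <= k)%nat -> accepted k.
Proof.
  destruct stage_rejected_index_lt as [N HN].
  assert (Hmono : forall k, (l k <= l (S k))%nat).
  { intro k. destruct (step k) as [_ [_ [_ [[_ [Hl _]] | [_ [Hl _]]]]]]; lia. }
  assert (Hbound : forall k, (l k <= N)%nat).
  { induction k as [|k IHk]; [rewrite l0; lia|].
    destruct (step k) as [_ [_ [_ [[_ [Hl _]] | [Hrej [Hl _]]]]]]; [lia|].
    specialize (HN k Hrej). lia. }
  destruct (nat_nondecreasing_bounded_eventually_const l N Hmono Hbound) as [K HK].
  exists K. intros k Hk. apply NNPP; intro Hrej.
  destruct (step k) as [_ [_ [_ [[Hacc _] | [_ [Hl _]]]]]]; [contradiction|].
  pose proof (HK k Hk). pose proof (HK (S k) ltac:(lia)). lia.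
Qed.

Lemma stage_accepted_decrease k : accepted k ->
  f (x (S k)) <= f (x k) - beta * lam k * delta /\ lam k <= lam (S k).
Proof.
  intro Hacc. destruct (step k) as [_ [Hdesc [_ [[_ [_ Hlam]] | [Hrej _]]]]]; [|contradiction].
  destruct (stage_invariant k) as [_ [Hlam_pos _]].
  rewrite dot_vsub_swap in Hacc. split; [|lra].
  assert (beta * lam k * delta <= beta * lam k * dot (f' (x k)) (vsub (x k) (z k)))
    by (apply Rmult_le_compat_l; nra).
  nra.
Qed.

(* After the last rejection the steps never shrink, so each iteration lowers
   [f] by at least the fixed amount [beta * lam K * delta]. *)
Lemma stage_f_unbounded_below r : exists k, f (x k) < r.
Proof.
  destruct stage_eventually_accepted as [K HK].
  destruct (stage_invariant K) as [_ [HlamK _]].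
  set (c := beta * lam K * delta).
  assert (Hc : 0 < c) by (unfold c; apply Rmult_lt_0_compat; [nra | lra]).
  assert (Hdescent : forall m, lam K <= lam (K + m)%nat /\ f (x (K + m)%nat) <= f (x K) - INR m * c).
  { induction m as [|m [IHlam IHf]]; [rewrite Nat.add_0_r; simpl; split; lra|].
    rewrite Nat.add_succ_r, S_INR.
    destruct (stage_accepted_decrease (K + m) (HK (K + m)%nat ltac:(lia))) as [Hf Hlam].
    assert (c <= beta * lam (K + m)%nat * delta).
    { unfold c. apply Rmult_le_compat_r; [lra|]. apply Rmult_le_compat_l; lra. }
    lra. }
  destruct (INR_archimed c (f (x K) - r) Hc) as [m Hm].
  exists (K + m)%nat. destruct (Hdescent m) as [_ Hf]. lra.
Qed.

End Stage.

Theorem proposition5p1 (n : nat) (D : vec n -> Prop) (f : vec n -> R)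
  (f' : vec n -> vec n) (beta delta : R) (tau : nat -> R) (x0 : vec n)
  (x z : nat -> vec n) (lam : nat -> R) (l : nat -> nat) :
  set_nonempty D -> set_convex D -> set_closed D -> set_bounded D ->
  C1_with_gradient f f' ->
  0 < beta < 1 ->
  0 < delta ->
  (forall j, 0 < tau j < 1) -> Un_cv tau 0 ->
  D x0 ->
  x 0%nat = x0 -> l 0%nat = 0%nat -> 0 < lam 0%nat <= tau 0%nat ->
  (forall k, delta <= mu D f' (x k) ->
     D (z k) /\ delta <= dot (f' (x k)) (vsub (x k) (z k)) /\
     x (S k) = vadd (x k) (vscale (lam k) (vsub (z k) (x k))) /\
     ((f (x (S k)) <= f (x k) + beta * lam k * dot (f' (x k)) (vsub (z k) (x k))
       /\ l (S k) = l k /\ lam k <= lam (S k) <= tau (l k))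
      \/
      (~ (f (x (S k)) <= f (x k) + beta * lam k * dot (f' (x k)) (vsub (z k) (x k)))
       /\ l (S k) = S (l k) /\ 0 < lam (S k) <= Rmin (lam k) (tau (S (l k)))))) ->
  exists k, mu D f' (x k) < delta.
Proof.
  intros _ Hconvex _ [M HM] Hf Hbeta Hdelta Htau Htau_cv Hx0 Hx_0 Hl0 Hlam0 Hstep.
  rewrite <- Hx_0 in Hx0.
  apply NNPP; intro Hno_restart.
  assert (Hrun : forall k, delta <= mu D f' (x k)).
  { intro k. apply Rnot_lt_le. intro Hk. apply Hno_restart. exists k. exact Hk. }
  pose proof (fun k => Hstep k (Hrun k)) as Hstage.
  destruct (bounded_below_on_bounded D f f' M HM (proj1 Hf)) as [m Hm].
  destruct (stage_f_unbounded_below n D f f' M beta delta tau x z lam l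
              HM Hconvex Hf Hbeta Hdelta Htau Htau_cv Hx0 Hl0 Hlam0 Hstage m) as [k Hk].
  destruct (stage_invariant n D f f' beta delta tau x z lam l
              Hconvex Htau Hx0 Hl0 Hlam0 Hstage k) as [Dxk _].
  pose proof (Hm _ Dxk). lra.
Qed.
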